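(* Let $n=3$, let $a_{11},a_{22},a_{33}\ge0$, and let $a_{13}=a_{21}=a_{32}=1$ and $a_{12}=a_{23}=a_{31}=0$. Then there exist $\pi_1,\pi_2,\pi_3>0$ such that $$\kappa:=\min_{i=1,2,3}\Big(8\pi_ia_{ii}-\sum_{j=1,\,j\ne i}^3\pi_ja_{ji}\Big)>0$$ if and only if $a_{11}a_{22}a_{33}>8^{-3}$. *)

From Stdlib Require Import Reals.
Open Scope R_scope.

Definition amat (a11 a22 a33 : R) (i j : nat) : R :=
  match i, j with
  | 1%nat, 1%nat => a11
  | 2%nat, 2%nat => a22
  | 3%nat, 3%nat => a33
  | 1%nat, 3%nat => 1
  | 2%nat, 1%nat => 1
  | 3%nat, 2%nat => 1
  | _, _ => 0
  end.

Definition kterm (a : nat -> nat -> R) (pi : nat -> R) (i : nat) : R :=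
  8 * pi i * a i i
  - (if Nat.eqb i 1 then 0 else pi 1%nat * a 1%nat i)
  - (if Nat.eqb i 2 then 0 else pi 2%nat * a 2%nat i)
  - (if Nat.eqb i 3 then 0 else pi 3%nat * a 3%nat i).

Definition kappa (a : nat -> nat -> R) (pi : nat -> R) : R :=
  Rmin (kterm a pi 1%nat) (Rmin (kterm a pi 2%nat) (kterm a pi 3%nat)).

From Stdlib Require Import Reals Lra Psatz.
Open Scope R_scope.

(* With x = 8 a11, y = 8 a22, z = 8 a33, positivity of kappa says
   pi2 < x pi1, pi3 < y pi2 and pi1 < z pi3. Going once around this cycle gives
   pi1 < x y z pi1, so x y z > 1. Conversely, if x y z > 1, fix pi1 = 1 and
   pi3 = m / z with 1 < m < x y z; then any pi2 strictly between m / (y z) and x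
   closes the cycle. *)

Lemma Rmin3_pos_iff (a b c : R) :
  0 < Rmin a (Rmin b c) <-> 0 < a /\ 0 < b /\ 0 < c.
Proof.
  split.
  - intros H.
    pose proof (Rmin_l a (Rmin b c)); pose proof (Rmin_r a (Rmin b c)).
    pose proof (Rmin_l b c); pose proof (Rmin_r b c).
    lra.
  - intros (Ha & Hb & Hc).
    apply Rmin_glb_lt; [| apply Rmin_glb_lt]; assumption.
Qed.

Lemma kappa_amat_pos_iff (a11 a22 a33 : R) (pi : nat -> R) :
  kappa (amat a11 a22 a33) pi > 0 <->
  pi 2%nat < 8 * a11 * pi 1%nat /\
  pi 3%nat < 8 * a22 * pi 2%nat /\
  pi 1%nat < 8 * a33 * pi 3%nat.
Proof.
  unfold kappa, kterm, amat, Rgt; simpl.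
  rewrite Rmin3_pos_iff.
  lra.
Qed.

Lemma cyclic_chain_product_gt_1 (x y z p1 p2 p3 : R) :
  0 < p1 -> 0 < p2 -> 0 < p3 ->
  p2 < x * p1 -> p3 < y * p2 -> p1 < z * p3 ->
  1 < x * y * z.
Proof.
  intros P1 P2 P3 C1 C2 C3.
  assert (Hz : 0 < z) by nra.
  assert (Hyz : 0 < y * z) by nra.
  assert (around : p1 < x * y * z * p1).
  { apply Rlt_trans with (z * p3); [exact C3 |].
    apply Rlt_trans with (y * z * p2); [nra |].
    replace (x * y * z * p1) with (y * z * (x * p1)) by ring.
    now apply Rmult_lt_compat_l. }
  nra.
Qed.

Lemma cyclic_chain_of_product_gt_1 (x y z : R) :
  0 <= x -> 0 <= y -> 0 <= z -> 1 < x * y * z ->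
  exists p1 p2 p3 : R, 0 < p1 /\ 0 < p2 /\ 0 < p3 /\
    p2 < x * p1 /\ p3 < y * p2 /\ p1 < z * p3.
Proof.
  intros Hx Hy Hz Hxyz.
  assert (Hxy : 0 < x * y) by nra.
  assert (Hz' : 0 < z) by nra.
  assert (Hy' : 0 < y) by nra.
  assert (Hyz : 0 < y * z) by nra.
  set (m := (1 + x * y * z) / 2).
  set (lower := m / (y * z)).
  set (p2 := (lower + x) / 2).
  assert (lower_pos : 0 < lower) by (apply Rdiv_lt_0_compat; unfold m; lra).
  assert (lower_lt_x : lower < x).
  { apply (Rmult_lt_reg_r (y * z)); [exact Hyz |].
    unfold lower, m; field_simplify; lra. }
  exists 1, p2, (m / z).
  assert (p3_eq : m / z = y * lower) by (unfold lower; field; lra).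
  assert (z_p3_eq : z * (m / z) = m) by (field; lra).
  rewrite z_p3_eq, p3_eq.
  unfold p2, m.
  repeat split; nra.
Qed.

Lemma cube_scaled_gt_1_iff (a b c : R) :
  a * b * c > / (8 ^ 3) <-> 1 < (8 * a) * (8 * b) * (8 * c).
Proof.
  replace ((8 * a) * (8 * b) * (8 * c)) with (8 ^ 3 * (a * b * c)) by ring.
  assert (H8 : 0 < 8 ^ 3) by lra.
  split; intros H.
  - rewrite <- (Rinv_r (8 ^ 3)) by lra.
    now apply Rmult_lt_compat_l.
  - apply (Rmult_lt_reg_l (8 ^ 3)); [exact H8 |].
    now rewrite Rinv_r by lra.
Qed.

Theorem lemma15 (a11 a22 a33 : R) :
  0 <= a11 -> 0 <= a22 -> 0 <= a33 ->
  ((exists pi : nat -> R,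
       0 < pi 1%nat /\ 0 < pi 2%nat /\ 0 < pi 3%nat /\
       kappa (amat a11 a22 a33) pi > 0)
   <-> a11 * a22 * a33 > / (8 ^ 3)).
Proof.
  intros H1 H2 H3.
  rewrite cube_scaled_gt_1_iff.
  split.
  - intros (pi & P1 & P2 & P3 & K).
    apply kappa_amat_pos_iff in K as (C1 & C2 & C3).
    exact (cyclic_chain_product_gt_1 _ _ _ _ _ _ P1 P2 P3 C1 C2 C3).
  - intros Hxyz.
    destruct (cyclic_chain_of_product_gt_1 (8 * a11) (8 * a22) (8 * a33))
      as (p1 & p2 & p3 & P1 & P2 & P3 & C); [lra | lra | lra | exact Hxyz |].
    exists (fun i => match i with 1%nat => p1 | 2%nat => p2 | _ => p3 end).
    repeat split; try assumption.
    now apply kappa_amat_pos_iff.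
Qed.
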